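(* Let $t>0$ and $u\ge 0$. For any $\phi\in C([0,t+u];\mathbb{R})$, \[ \mathcal{T}^t\bigl(\mathcal{T}^{t+u}(\phi)\bigr)(s)=\mathbb{T}^t_{\phi_t+\mathcal{T}^{t+u}(\phi)(t)}(\phi)(s),\qquad 0\le s\le t, \] where on both sides the transformations of duration $t$ act on the restrictions to $[0,t]$ of the paths.
   Context: For $r>0$ and $\psi\in C([0,r];\mathbb{R})$ let $A_s(\psi)=\int_0^s e^{2\psi_v}\,dv$. For $z\in\mathbb{R}$, $\mathbb{T}^r_z(\psi)(s)=\psi_s-\log\{1+\frac{A_s(\psi)}{A_r(\psi)}(e^z-1)\}$, $0\le s\le r$, and $\mathcal{T}^r(\psi)(s)=\mathbb{T}^r_{2\psi_r}(\psi)(s)$, $0\le s\le r$. *)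

From Stdlib Require Import Reals.
From Coquelicot Require Import Coquelicot.
Open Scope R_scope.

(* A path psi in C([0,r];R) is represented by a function R -> R; only its
   values on [0,r] are used by the definitions below. *)

Definition cont_on (a b : R) (psi : R -> R) : Prop :=
  forall x, a <= x <= b ->
    filterlim psi (within (fun y => a <= y <= b) (locally x)) (locally (psi x)).

Definition A_ (psi : R -> R) (s : R) : R :=
  RInt (fun v => exp (2 * psi v)) 0 s.

Definition TT (r z : R) (psi : R -> R) (s : R) : R :=
  psi s - ln (1 + A_ psi s / A_ psi r * (exp z - 1)).

Definition calT (r : R) (psi : R -> R) (s : R) : R :=
  TT r (2 * psi r) psi s.

(* If [G v = 1 + c A_v(phi)] then [(A/G)' = e^{2 phi} (G - c A) / G^2 = e^{2 phi} / G^2], so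
   [A_s(phi - ln G) = A_s(phi) / G_s]: a logarithmic transformation acts on [A] by a Möbius
   map.  Feeding this into [T^t_w (T^r_z phi)] and using that [G] is affine in [A] with
   [G_0 = 1] gives [T^t_w (T^r_z phi) = T^t_{w + ln G_t} phi = T^t_{w + phi_t - T^r_z(phi)_t} phi]
   on [[0,t]]; with [w = 2 T^r_z(phi)_t] this is the theorem. *)
From Stdlib Require Import Reals Lra.
From Coquelicot Require Import Coquelicot.
Open Scope R_scope.

Definition clamp (r x : R) : R := Rmax 0 (Rmin x r).

Lemma clamp_in (r x : R) : 0 <= r -> 0 <= clamp r x <= r.
Proof. intros; unfold clamp, Rmax, Rmin; repeat destruct Rle_dec; lra. Qed.

Lemma clamp_id (r x : R) : 0 <= x <= r -> clamp r x = x.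
Proof. intros; unfold clamp, Rmax, Rmin; repeat destruct Rle_dec; lra. Qed.

Lemma clamp_lipschitz (r x y : R) :
  0 <= r -> Rabs (clamp r y - clamp r x) <= Rabs (y - x).
Proof.
  intros; unfold clamp, Rmax, Rmin; repeat destruct Rle_dec;
  unfold Rabs; repeat destruct Rcase_abs; lra.
Qed.

(* The fundamental theorem of calculus used below needs two-sided derivatives up to the
   endpoints, so paths are first extended continuously to all of [R]. *)
Lemma cont_on_extend (r : R) (phi : R -> R) :
  0 <= r -> cont_on 0 r phi ->
  exists phi', (forall x, continuous phi' x) /\ (forall x, 0 <= x <= r -> phi' x = phi x).
Proof.
  intros Hr Hc; exists (fun y => phi (clamp r y)); split.
  - intros x P HP.
    destruct (Hc (clamp r x) (clamp_in r x Hr) P HP) as [eps Heps].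
    exists eps; intros y Hy; apply Heps.
    + exact (Rle_lt_trans _ _ _ (clamp_lipschitz r x y Hr) Hy).
    + now apply clamp_in.
  - intros x Hx; now rewrite clamp_id.
Qed.

Lemma A_ext (phi phi' : R -> R) (s : R) :
  0 <= s -> (forall v, 0 <= v <= s -> phi v = phi' v) -> A_ phi s = A_ phi' s.
Proof.
  intros Hs Heq; unfold A_; apply RInt_ext; intros v Hv.
  rewrite Rmin_left, Rmax_right in Hv by lra; rewrite Heq by lra; reflexivity.
Qed.

Lemma TT_ext (r z : R) (phi phi' : R -> R) (s : R) :
  0 <= s <= r -> (forall v, 0 <= v <= r -> phi v = phi' v) ->
  TT r z phi s = TT r z phi' s.
Proof.
  intros Hs Heq; unfold TT.
  rewrite (A_ext phi phi' s), (A_ext phi phi' r), (Heq s); try lra;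
    intros; apply Heq; lra.
Qed.

Lemma exp_double_sub_ln (x y : R) : 0 < y -> exp (2 * (x - ln y)) = exp (2 * x) / y ^ 2.
Proof.
  intros Hy; replace (2 * (x - ln y)) with (2 * x + - ln y + - ln y) by ring.
  rewrite !exp_plus, exp_Ropp, exp_ln by exact Hy; field; lra.
Qed.

Lemma one_add_convex_pos (x y : R) : 0 <= x <= 1 -> 0 < y -> 0 < 1 + x * (y - 1).
Proof. intros; nra. Qed.

Section ContinuousPath.

Variable phi : R -> R.
Hypothesis phi_cont : forall x, continuous phi x.

Let weight (v : R) : R := exp (2 * phi v).

Lemma continuous_weight (x : R) : continuous weight x.
Proof.
  apply continuous_exp_comp, (continuous_scal_r 2 phi), phi_cont.
Qed.

Lemma ex_RInt_weight (a b : R) : ex_RInt weight a b.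
Proof.
  apply (ex_RInt_continuous (V := R_CompleteNormedModule)); intros; apply continuous_weight.
Qed.

Lemma is_derive_A (x : R) : is_derive (A_ phi) x (exp (2 * phi x)).
Proof.
  apply (is_derive_RInt weight (A_ phi) 0).
  - apply filter_forall; intros y.
    apply (RInt_correct (V := R_CompleteNormedModule)), ex_RInt_weight.
  - apply continuous_weight.
Qed.

Lemma A_0 : A_ phi 0 = 0.
Proof. apply (RInt_point (V := R_CompleteNormedModule)). Qed.

Lemma A_lt (a b : R) : a < b -> A_ phi a < A_ phi b.
Proof.
  intros Hab; change (RInt weight 0 a < RInt weight 0 b).
  rewrite <- (RInt_Chasles (V := R_CompleteNormedModule) weight 0 a b) by apply ex_RInt_weight.
  enough (0 < RInt weight a b) by (change (plus ?x ?y) with (x + y); lra).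
  apply RInt_gt_0; trivial; intros; [apply exp_pos | apply continuous_weight].
Qed.

Lemma A_pos (t : R) : 0 < t -> 0 < A_ phi t.
Proof. intros Ht; rewrite <- A_0; now apply A_lt. Qed.

Lemma A_ratio_in_unit (s t : R) : 0 <= s <= t -> 0 < t -> 0 <= A_ phi s / A_ phi t <= 1.
Proof.
  intros Hs Ht.
  assert (Hle : forall a b, a <= b -> A_ phi a <= A_ phi b).
  { intros a b [Hab | ->]; [apply Rlt_le, A_lt, Hab | apply Rle_refl]. }
  assert (Hpos := A_pos t Ht).
  split.
  - apply Rdiv_le_0_compat; trivial; rewrite <- A_0; apply Hle; lra.
  - apply (Rdiv_le_1 _ _ Hpos); apply Hle; lra.
Qed.

Lemma A_log_transform (c s : R) :
  0 <= s -> (forall v, 0 <= v <= s -> 0 < 1 + c * A_ phi v) ->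
  A_ (fun v => phi v - ln (1 + c * A_ phi v)) s = A_ phi s / (1 + c * A_ phi s).
Proof.
  intros Hs HG.
  set (G := fun v => 1 + c * A_ phi v).
  set (dF := fun v => exp (2 * (phi v - ln (G v)))).
  assert (HGd : forall x, is_derive G x (c * exp (2 * phi x))).
  { intros x; rewrite <- (Rplus_0_l (c * exp (2 * phi x))).
    apply (is_derive_plus (K := R_AbsRing) (V := R_NormedModule) (fun _ => 1)).
    - apply (is_derive_const (K := R_AbsRing) (V := R_NormedModule)).
    - apply is_derive_scal, is_derive_A. }
  assert (HFd : forall x, 0 <= x <= s -> is_derive (fun v => A_ phi v / G v) x (dF x)).
  { intros x Hx; unfold dF; rewrite exp_double_sub_ln by now apply HG.
    assert (HGx : G x <> 0) by (apply Rgt_not_eq, HG, Hx).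
    replace (exp (2 * phi x) / G x ^ 2)
      with ((exp (2 * phi x) * G x - A_ phi x * (c * exp (2 * phi x))) / G x ^ 2)
      by (unfold G in HGx |- *; field; exact HGx).
    apply is_derive_div; [apply is_derive_A | apply HGd | exact HGx]. }
  assert (HdFc : forall x, 0 <= x <= s -> continuous dF x).
  { intros x Hx; apply continuous_exp_comp.
    apply (continuous_scal_r 2 (fun v => minus (phi v) (ln (G v)))).
    apply (continuous_minus (V := R_NormedModule)); [apply phi_cont|].
    apply (continuous_comp G ln).
    - apply (ex_derive_continuous (K := R_AbsRing) (V := R_NormedModule)).
      eexists; apply HGd.
    - apply continuous_ln, HG, Hx. }
  assert (HI : is_RInt dF 0 s (minus (A_ phi s / G s) (A_ phi 0 / G 0))).
  { apply (is_RInt_derive (V := R_CompleteNormedModule) (fun v => A_ phi v / G v));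
      intros x Hx; rewrite Rmin_left, Rmax_right in Hx by lra; auto. }
  apply (is_RInt_unique (V := R_CompleteNormedModule)) in HI.
  unfold A_ at 1; rewrite (RInt_ext _ dF), HI, A_0.
  - unfold minus, plus, opp, Rdiv; simpl; rewrite Rmult_0_l, Ropp_0, Rplus_0_r.
    reflexivity.
  - intros x Hx; rewrite Rmin_left, Rmax_right in Hx by lra; reflexivity.
Qed.

Lemma TT_denominator_pos (r z v : R) :
  0 < r -> 0 <= v <= r -> 0 < 1 + A_ phi v / A_ phi r * (exp z - 1).
Proof.
  intros; apply one_add_convex_pos; [apply A_ratio_in_unit; lra | apply exp_pos].
Qed.

Lemma A_TT (r z s : R) :
  0 < r -> 0 <= s <= r ->
  A_ (TT r z phi) s = A_ phi s / (1 + A_ phi s / A_ phi r * (exp z - 1)).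
Proof.
  intros Hr Hs.
  set (c := (exp z - 1) / A_ phi r).
  assert (Hc : forall v, A_ phi v / A_ phi r * (exp z - 1) = c * A_ phi v)
    by (intros; unfold c, Rdiv; ring).
  transitivity (A_ (fun v => phi v - ln (1 + c * A_ phi v)) s).
  - apply A_ext; [lra|]; intros v _; unfold TT; rewrite Hc; reflexivity.
  - rewrite A_log_transform, Hc; [reflexivity | lra |].
    intros v Hv; rewrite <- Hc; apply TT_denominator_pos; lra.
Qed.

Lemma TT_TT_of_continuous (r z t w s : R) :
  0 < t <= r -> 0 <= s <= t ->
  TT t w (TT r z phi) s = TT t (w + phi t - TT r z phi t) phi s.
Proof.
  intros Ht Hs.
  change (TT t w (TT r z phi) s) with
    (TT r z phi s - ln (1 + A_ (TT r z phi) s / A_ (TT r z phi) t * (exp w - 1))).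
  rewrite !A_TT by lra; unfold TT.
  set (x := A_ phi s / A_ phi t).
  set (Gs := 1 + A_ phi s / A_ phi r * (exp z - 1)).
  set (Gt := 1 + A_ phi t / A_ phi r * (exp z - 1)).
  assert (Hx : 0 <= x <= 1) by (apply A_ratio_in_unit; lra).
  assert (HGs : 0 < Gs) by (apply TT_denominator_pos; lra).
  assert (HGt : 0 < Gt) by (apply TT_denominator_pos; lra).
  assert (HAt := A_pos t (proj1 Ht)).
  assert (HAr := A_pos r (Rlt_le_trans _ _ _ (proj1 Ht) (proj2 Ht))).
  assert (Haff : Gs = 1 + x * (Gt - 1)) by (unfold Gs, Gt, x; field; lra).
  replace (w + phi t - (phi t - ln Gt)) with (w + ln Gt) by ring.
  rewrite exp_plus, exp_ln by exact HGt.
  replace (A_ phi s / Gs / (A_ phi t / Gt)) with (x * Gt / Gs) by (unfold x; field; lra).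
  replace (1 + x * Gt / Gs * (exp w - 1)) with ((1 + x * (exp w * Gt - 1)) / Gs)
    by (rewrite Haff; field; rewrite <- Haff; lra).
  rewrite ln_div; [ring | | exact HGs].
  apply one_add_convex_pos; [exact Hx | apply Rmult_lt_0_compat; [apply exp_pos | exact HGt]].
Qed.

End ContinuousPath.

Lemma TT_TT (r z t w : R) (phi : R -> R) (s : R) :
  0 < t <= r -> cont_on 0 r phi -> 0 <= s <= t ->
  TT t w (TT r z phi) s = TT t (w + phi t - TT r z phi t) phi s.
Proof.
  intros Ht Hc Hs.
  destruct (cont_on_extend r phi) as [phi' [Hcont Heq]]; [lra | exact Hc |].
  assert (HTT : forall v, 0 <= v <= r -> TT r z phi v = TT r z phi' v).
  { intros v Hv; apply TT_ext; [exact Hv |]; intros; symmetry; apply Heq; lra. }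
  rewrite (TT_ext t w _ (TT r z phi') s Hs) by (intros; apply HTT; lra).
  rewrite (TT_ext t _ phi phi' s Hs) by (intros; symmetry; apply Heq; lra).
  rewrite HTT, <- (Heq t) by lra.
  now apply TT_TT_of_continuous.
Qed.

Theorem proposition2p4 (t u : R) (phi : R -> R) :
  0 < t -> 0 <= u -> cont_on 0 (t + u) phi ->
  forall s, 0 <= s <= t ->
    calT t (calT (t + u) phi) s = TT t (phi t + calT (t + u) phi t) phi s.
Proof.
  intros Ht Hu Hc s Hs; unfold calT.
  rewrite TT_TT; [f_equal; ring | lra | exact Hc | exact Hs].
Qed.
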